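(* Under the standing assumptions, if $g$ is e-convex, then $$v(P)\ \ge\ v(\bar D^F)\ \ge\ v(D^F).$$
   Context: Let $X$ be a nontrivial separated locally convex space with topological dual $X^*$, endowed with the topology $\sigma(X,X^* )$; $\langle x,x^*\rangle$ is the value of $x^*\in X^*$ at $x\in X$. Put $W:=X^*\times X^*\times\mathbb{R}$, $\mathbb{R}_{++}:=]0,+\infty[$ and $Z:=X^*\times X^*\times\mathbb{R}_{++}$. For $y^*\in X^*$, $\alpha\in\mathbb{R}$, let $H^-_{y^*,\alpha}:=\{x\in X:\langle x,y^*\rangle<\alpha\}$. The coupling function $c:X\times W\to\overline{\mathbb{R}}$ is $c(x,(x^*,y^*,\alpha)):=\langle x,x^*\rangle$ if $\langle x,y^*\rangle<\alpha$ and $:=+\infty$ otherwise; $c'((x^*,y^*,\alpha),x):=c(x,(x^*,y^*,\alpha))$. For $h:X\to\overline{\mathbb{R}}$ its $c$-conjugate is $h^c:W\to\overline{\mathbb{R}}$, $h^c(w):=\sup_{x\in X}\{c(x,w)-h(x)\}$; for $k:W\to\overline{\mathbb{R}}$, $k^{c'}(x):=\sup_{w\in W}\{c'(w,x)-k(w)\}$. In these conjugations the convention $(+\infty)+(-\infty)=(-\infty)+(+\infty)=(+\infty)-(+\infty)=(-\infty)-(-\infty)=-\infty$ is used (so for proper $h$, $h^c(x^*,y^*,\alpha)=h^*(x^* )$ if $\operatorname{dom}h\subseteq H^-_{y^*,\alpha}$ and $+\infty$ otherwise, $h^*$ the Fenchel conjugate). $\operatorname{dom}$ and $\operatorname{epi}$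 denote effective domain and epigraph; $\delta_A$ is the indicator function of $A$ ($0$ on $A$, $+\infty$ outside). A set $C\subseteq X$ is e-convex if for every $x_0\notin C$ there is $x^*\in X^*$ with $\langle x-x_0,x^*\rangle<0$ for all $x\in C$; a function is e-convex if its epigraph is e-convex in $X\times\mathbb{R}$. Standing assumptions: $f,g:X\to\overline{\mathbb{R}}$ are proper convex functions with $\operatorname{dom}f\subseteq\operatorname{dom}g$, $A\subseteq X$ is nonempty, and in the objective $f-g$ the convention $(+\infty)-(+\infty)=+\infty$ is used. The primal problem $(P)$ is $\inf_{x\in A}\{f(x)-g(x)\}$, with value $v(P)=\inf_{x\in X}\{f(x)-g(x)+\delta_A(x)\}$. For $(u^*,v^*,\gamma),(x^*,y^*,\alpha)\in W$ set $\varphi(u^*,v^*,\gamma;x^*,y^*,\alpha):=g^c(u^*,v^*,\gamma)-f^c(u^*-x^*,-y^*,\alpha)-\delta_A^c(x^*,y^*,\alpha)$. The dual problems are $(D^F)$: $v(D^F):=\sup_{(x^*,y^*,\alpha)\in Z}\ \inf_{(u^*,v^*,\gamma)\in\operatorname{dom}g^c}\varphi(u^*,v^*,\gamma;x^*,y^*,\alpha)$, and $(\bar D^F)$: $v(\bar D^F):=\inf_{(u^*,v^*,\gamma)\in\operatorname{dom}g^c}\ \sup_{(x^*,y^*,\alpha)\in Z}\varphi(u^*,v^*,\gamma;x^*,y^*,\alpha)$. *)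

From HB Require Import structures.
From mathcomp Require Import all_boot all_order all_algebra.
From mathcomp Require Import all_classical all_reals.
From mathcomp Require Import ereal topology normedtype tvs.
Set Implicit Arguments. Unset Strict Implicit. Unset Printing Implicit Defensive.
Import Order.TTheory GRing.Theory Num.Theory numFieldTopology.Exports numFieldNormedType.Exports.
Local Open Scope classical_set_scope.
Local Open Scope ring_scope.

Section Defs.
Variable R : realType.

Definition is_dual (E : tvsType R) (xs : E -> R) : Prop :=
  (forall (a : R) (x y : E), xs (a *: x + y) = a * xs x + xs y) /\ continuous xs.

Definition convex_subset (V : lmodType R) (C : set V) : Prop :=
  forall x y, C x -> C y -> forall t : R, 0 <= t -> t <= 1 ->
    C (t *: x + (1 - t) *: y).

Definition e_convex_set (E : tvsType R) (C : set E) : Prop :=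
  forall x0, ~ C x0 -> exists xs : E -> R, is_dual xs /\
    forall x, C x -> xs (x - x0) < 0.

Variable X : tvsType R.

Definition dom (h : X -> \bar R) : set X := [set x | (h x < +oo)%E].
Definition epi (h : X -> \bar R) : set (X * R^o)%type :=
  [set p | (h p.1 <= p.2%:E)%E].
Definition proper_fun (h : X -> \bar R) : Prop :=
  (exists x, (h x < +oo)%E) /\ (forall x, h x != -oo%E).
Definition convex_fun (h : X -> \bar R) : Prop := convex_subset (epi h).
Definition e_convex_fun (h : X -> \bar R) : Prop := e_convex_set (epi h).
Definition indicator (A : set X) : X -> \bar R :=
  fun x => if `[< A x >] then 0%E else +oo%E.

(* W = X^* x X^* x R, elements represented as triples (x*, y*, alpha) *)
Definition Wt : Type := ((X -> R) * (X -> R) * R)%type.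
Definition inW (w : Wt) : Prop := is_dual w.1.1 /\ is_dual w.1.2.
Definition inZ (w : Wt) : Prop := inW w /\ 0 < w.2.

Definition coupling (x : X) (w : Wt) : \bar R :=
  if w.1.2 x < w.2 then (w.1.1 x)%:E else +oo%E.

(* c-conjugate (mathcomp's + satisfies +oo + -oo = -oo) *)
Definition cconj (h : X -> \bar R) (w : Wt) : \bar R :=
  ereal_sup [set (coupling x w - h x)%E | x in [set: X]].

Definition domW (k : Wt -> \bar R) : set Wt :=
  [set w | inW w /\ (k w < +oo)%E].

(* objective value with (+oo)-(+oo) = +oo : dual addition *)
Definition vP (f g : X -> \bar R) (A : set X) : \bar R :=
  ereal_inf [set dual_adde (dual_adde (f x) (- g x)) (indicator A x) | x in [set: X]].

Definition phi (f g : X -> \bar R) (A : set X) (u w : Wt) : \bar R :=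
  (cconj g u - cconj f ((fun z => u.1.1 z - w.1.1 z)%R, (fun z => - w.1.2 z)%R, w.2)
     - cconj (indicator A) w)%E.

Definition vDF (f g : X -> \bar R) (A : set X) : \bar R :=
  ereal_sup [set ereal_inf [set phi f g A u w | u in domW (cconj g)] | w in inZ].

Definition vDFbar (f g : X -> \bar R) (A : set X) : \bar R :=
  ereal_inf [set ereal_sup [set phi f g A u w | w in inZ] | u in domW (cconj g)].

End Defs.

From HB Require Import structures.
From mathcomp Require Import all_boot all_order all_algebra.
From mathcomp Require Import all_classical all_reals.
From mathcomp Require Import ereal topology normedtype tvs.
From mathcomp Require Import lra.
Set Implicit Arguments. Unset Strict Implicit. Unset Printing Implicit Defensive.
Import Order.TTheory GRing.Theory Num.Theory numFieldTopology.Exports numFieldNormedType.Exports.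
Local Open Scope classical_set_scope.
Local Open Scope ring_scope.

(* Weak duality v(D^F) <= v(Dbar^F) is the general sup-inf <= inf-sup inequality.
   For v(Dbar^F) <= v(P) fix x in A with f x, g x finite and e > 0.  Separating
   (x, g x - e) from the e-convex epigraph of g yields a continuous linear l with
   g z >= g x - e + l (z - x); then u = (l, 0, 1) lies in dom g^c with
   g^c(u) <= l x - g x + e, and the Fenchel-Young inequalities for f^c and
   delta_A^c at x bound phi(u, w) by f x - g x + e for every w. *)

Section DualFacts.
Variables (R : realType) (E : tvsType R) (xs : E -> R).
Hypothesis dxs : is_dual xs.

Lemma dual0 : xs 0 = 0.
Proof. by have := dxs.1 1 0 0; rewrite scale1r addr0 mul1r; lra. Qed.

Lemma dualD p q : xs (p + q) = xs p + xs q.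
Proof. by have := dxs.1 1 p q; rewrite scale1r mul1r. Qed.

Lemma dualZ k p : xs (k *: p) = k * xs p.
Proof. by have := dxs.1 k p 0; rewrite !addr0 dual0 addr0. Qed.

Lemma dualB p q : xs (p - q) = xs p - xs q.
Proof. by rewrite dualD -scaleN1r dualZ mulN1r. Qed.

Lemma dual_mulr c : is_dual (fun z => xs z * c).
Proof.
split=> [k p q|z]; first by rewrite dxs.1 mulrDl mulrA.
apply: (continuous_comp (f := xs) (g := fun r : R => r * c)); last exact: mulrr_continuous.
exact: dxs.2.
Qed.

End DualFacts.

Lemma dual_cst0 (R : realType) (E : tvsType R) : is_dual (fun _ : E => (0 : R)).
Proof. by split; [move=> *; rewrite mulr0 addr0 | exact: cst_continuous]. Qed.

Section DualOnProduct.
Variables (R : realType) (E : tvsType R) (xs : (E * R^o)%type -> R).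
Hypothesis dxs : is_dual xs.

Lemma dual_pair z t : xs (z, t) = xs (z, 0) + t * xs (0, 1).
Proof.
rewrite -(dualZ dxs) -(dualD dxs); congr xs.
apply: injective_projections; rewrite /= ?scaler0 ?addr0 ?add0r //.
exact: (esym (mulr1 t)).
Qed.

Lemma dual_fst : is_dual (fun z : E => xs (z, 0)).
Proof.
split=> [k z y|z].
  rewrite -(dualZ dxs) -(dualD dxs); congr xs.
  by apply: injective_projections; rewrite /= ?scaler0 ?addr0.
apply: (continuous_comp (f := fun z : E => ((z, 0) : E * R^o))); last exact: dxs.2.
exact: (cvg_pair (f := id) (g := fun _ => (0 : R^o)) cvg_id (cvg_cst _)).
Qed.

End DualOnProduct.

Section EConvexMinorant.
Variables (R : realType) (X : tvsType R) (g : X -> \bar R).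
Hypothesis gec : e_convex_fun g.

Lemma e_convex_fun_affine_minorant x q e : g x = q%:E -> 0 < e ->
  exists l : X -> R, is_dual l /\
    forall z, (((l z - l x) + (q - e))%:E <= g z)%E.
Proof.
move=> gx e0.
have [xs [dxs sep]] : exists xs, is_dual xs /\
    forall p, epi g p -> xs (p - (x, q - e)) < 0.
  by apply: gec; rewrite /epi /= gx lee_fin; lra.
set s := xs (0, 1); set a := fun z : X => xs (z, 0).
have a_dual : is_dual a := dual_fst dxs.
have s_lt0 : s < 0.
  have := sep (x, q); rewrite /epi /= gx lexx => /(_ isT).
  have -> : ((x, q) : X * R^o) - (x, q - e) = (0, e).
    by apply: injective_projections; rewrite /= ?subrr //; lra.
  by rewrite (dual_pair dxs) (dual0 dxs) add0r pmulr_rlt0.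
exists (fun z => a z * (- s)^-1); split; first exact: dual_mulr.
have epi_strict z t : (g z <= t%:E)%E ->
    a z * (- s)^-1 - a x * (- s)^-1 < t - (q - e).
  move=> gzt; have := sep (z, t) gzt.
  rewrite (dual_pair dxs) -/s /=; have := dualB a_dual z x; rewrite /a => ->.
  by rewrite -mulrBl ltr_pdivrMr ?oppr_gt0 //; nra.
move=> z; case gz: (g z) => [t| |].
- by rewrite lee_fin; have := epi_strict z t; rewrite gz lexx; lra.
- by rewrite leey.
- exfalso; have := epi_strict z (a z * (- s)^-1 - a x * (- s)^-1 + (q - e) - 1).
  by rewrite gz leNye => /(_ isT); lra.
Qed.

End EConvexMinorant.

Section CConjugate.
Variables (R : realType) (X : tvsType R).
Local Open Scope ereal_scope.

Lemma coupling_affine (l : X -> R) z :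
  coupling z (l, (fun _ => 0%R), 1%R) = (l z)%:E.
Proof. by rewrite /coupling /= ltr01. Qed.

Lemma cconj_ge (h : X -> \bar R) x w : coupling x w - h x <= cconj h w.
Proof. exact: ereal_sup_ubound. Qed.

Lemma cconj_le_affine_minorant (h : X -> \bar R) (l : X -> R) (c : R) :
  (forall z, (l z - c)%:E <= h z) -> cconj h (l, (fun _ => 0%R), 1%R) <= c%:E.
Proof.
move=> minor; apply: ge_ereal_sup => _ [z _ <-]; rewrite coupling_affine.
have := minor z; case: (h z) => [t| |] //=; last by rewrite leNye.
by rewrite !lee_fin; lra.
Qed.

Lemma phi_le_at (f g : X -> \bar R) (A : set X) (u w : Wt X) x (r c : R) :
  A x -> f x = r%:E -> cconj g u <= c%:E ->
  phi f g A u w <= (c - u.1.1 x + r)%:E.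
Proof.
move=> Ax fx gu; apply: le_trans (leeB (leeB gu (cconj_ge _ x _)) (cconj_ge _ x w)) _.
rewrite fx /indicator asboolT // /coupling /=.
by case: ifP => _; case: ifP => _ /=; rewrite ?addeNy ?leNye // -!EFinD lee_fin; lra.
Qed.

End CConjugate.

Lemma ereal_sup_inf_le_inf_sup (R : realType) (U W : Type) (S : set U) (T : set W)
    (F : U -> W -> \bar R) :
  (ereal_sup [set ereal_inf [set F u w | u in S] | w in T] <=
   ereal_inf [set ereal_sup [set F u w | w in T] | u in S])%E.
Proof.
apply: ge_ereal_sup => _ [w Tw <-]; apply: le_ereal_inf_tmp => _ [u Su <-].
apply: ge_ereal_inf; exists (F u w); first by exists u.
by apply: le_ereal_sup_tmp; exists (F u w) => //; exists w.
Qed.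

Lemma vDFbar_le_at (R : realType) (X : tvsType R) (f g : X -> \bar R) (A : set X)
    x (r q : R) :
  e_convex_fun g -> A x -> f x = r%:E -> g x = q%:E ->
  (vDFbar f g A <= (r - q)%:E)%E.
Proof.
move=> gec Ax fx gx; apply/lee_addgt0Pr => e e0.
have [l [dl minor]] := e_convex_fun_affine_minorant gec gx e0.
pose u : Wt X := (l, (fun _ => 0), 1).
have gu : (cconj g u <= (l x - (q - e))%:E)%E.
  apply: cconj_le_affine_minorant => z; apply: le_trans (minor z).
  by rewrite lee_fin; lra.
have udom : domW (cconj g) u.
  by split; [split; [exact: dl | exact: dual_cst0] | exact: le_lt_trans gu (ltry _)].
apply: ge_ereal_inf; exists (ereal_sup [set phi f g A u w | w in inZ (X:=X)]).
  by exists u.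
apply: ge_ereal_sup => _ [w _ <-]; apply: le_trans (phi_le_at w Ax fx gu) _.
by rewrite -EFinD lee_fin /u /=; lra.
Qed.

Theorem mainTheorem1 (R : realType) (X : tvsType R)
  (HX : hausdorff_space X) (Hnt : exists x : X, x != 0)
  (f g : X -> \bar R) (A : set X)
  (Hf : proper_fun f) (Hg : proper_fun g)
  (Hfc : convex_fun f) (Hgc : convex_fun g)
  (Hdom : dom f `<=` dom g) (HA : A !=set0)
  (Hge : e_convex_fun g) :
  (vDFbar f g A <= vP f g A)%E /\ (vDF f g A <= vDFbar f g A)%E.
Proof.
split; last exact: ereal_sup_inf_le_inf_sup.
apply: le_ereal_inf_tmp => _ [x _ <-].
have [Ax|nAx] := pselect (A x); last first.
  by rewrite /indicator asboolF //; case: (dual_adde (f x) _) => [r| |] /=; rewrite leey.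
case fx: (f x) => [r| |]; last by have := Hf.2 x; rewrite fx.
  have : dom g x by apply: Hdom; rewrite /dom /= fx ltry.
  rewrite /dom /=; case gx: (g x) => [q| |] // _; last by have := Hg.2 x; rewrite gx.
  apply: le_trans (vDFbar_le_at Hge Ax fx gx) _.
  by rewrite /indicator asboolT //= /dual_adde /= lee_fin; lra.
by rewrite /= leey.
Qed.
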